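(* Let $t$ be a positive integer and let $\mathcal{P}=\{P_1,\ldots,P_E\}$ be a locally $(2t,2)$-bounded partition of $\mathbb{F}_q^k$ (with this fixed indexing of its blocks). For $u\in\mathbb{F}_q^k$ let $B_{\mathcal{P}}(u,2t)=\{j\in[E]: B(u,2t)\cap P_j\neq\emptyset\}$. Define $\mathcal{C}:\mathbb{F}_q^k\to\mathbb{F}_q^{k+2t}$ by $\mathcal{C}(u)=(u,u_p)$, where, if $u\in P_i$, $u_p=(0,\ldots,0)\in\mathbb{F}_q^{2t}$ when $i=\min B_{\mathcal{P}}(u,2t)$ and $u_p=(1,\ldots,1)\in\mathbb{F}_q^{2t}$ otherwise. Then $\mathcal{C}$ is a $(\mathcal{P},t)$-encoding.
   Context: $B(u,\rho)$ denotes the Hamming ball of radius $\rho$ centered at $u$. A partition $\mathcal{P}=\{P_1,\ldots,P_E\}$ of $\mathbb{F}_q^k$ is locally $(\rho,\lambda)$-bounded if for every $u\in\mathbb{F}_q^k$, $|\{j\in[E]: B(u,\rho)\cap P_j\ne\emptyset\}|\le\lambda$. A $(\mathcal{P},t)$-encoding is a systematic map $\mathcal{C}:\mathbb{F}_q^k\to\mathbb{F}_q^{k+r}$ with $d(\mathcal{C}(u),\mathcal{C}(v))\ge 2t+1$ (Hamming distance) whenever $u,v$ lie in different blocks of $\mathcal{P}$. *)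

From mathcomp Require Import all_boot all_order all_algebra.
Set Implicit Arguments. Unset Strict Implicit. Unset Printing Implicit Defensive.
Import GRing.Theory.
Local Open Scope ring_scope.

Definition hamming (F : finFieldType) (n : nat) (x y : 'rV[F]_n) : nat :=
  #|[set i : 'I_n | x 0 i != y 0 i]|.

Definition hball (F : finFieldType) (n : nat) (u : 'rV[F]_n) (rho : nat)
  : {set 'rV[F]_n} := [set v | (hamming u v <= rho)%N].

(* A partition P = {P_1,...,P_E} of F^k with fixed indexing is given by the
   block-index map blk : F^k -> 'I_E (P_j = blk^-1 j), with all blocks nonempty. *)
Definition is_partition (F : finFieldType) (k E : nat) (blk : 'rV[F]_k -> 'I_E)
  : Prop := forall j : 'I_E, exists u, blk u = j.

Definition block (F : finFieldType) (k E : nat) (blk : 'rV[F]_k -> 'I_E) (j : 'I_E)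
  : {set 'rV[F]_k} := [set u | blk u == j].

Definition ballP (F : finFieldType) (k E : nat) (blk : 'rV[F]_k -> 'I_E)
  (u : 'rV[F]_k) (rho : nat) : {set 'I_E} :=
  [set j : 'I_E | hball u rho :&: block blk j != set0].

Definition locally_bounded (F : finFieldType) (k E : nat) (blk : 'rV[F]_k -> 'I_E)
  (rho lam : nat) : Prop :=
  forall u : 'rV[F]_k, (#|ballP blk u rho| <= lam)%N.

Definition encoding (F : finFieldType) (k E r : nat) (blk : 'rV[F]_k -> 'I_E)
  (t : nat) (C : 'rV[F]_k -> 'rV[F]_(k + r)) : Prop :=
  (forall u, lsubmx (C u) = u) /\
  (forall u v, blk u != blk v -> (2 * t + 1 <= hamming (C u) (C v))%N).

Definition thm6_code (F : finFieldType) (k E : nat) (blk : 'rV[F]_k -> 'I_E)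
  (t : nat) (u : 'rV[F]_k) : 'rV[F]_(k + 2 * t) :=
  row_mx u (if blk u == [arg min_(j < blk u in ballP blk u (2 * t)) (j : nat)]
            then const_mx 0 else const_mx 1).

From mathcomp Require Import all_boot all_order all_algebra.
Import GRing.Theory.

Set Implicit Arguments.
Unset Strict Implicit.
Unset Printing Implicit Defensive.

(* If d(u,v) <= 2t, each of u, v lies in the other's 2t-ball, so local
   (2t,2)-boundedness forces B_P(u,2t) = B_P(v,2t) = {blk u, blk v}.  Both
   then select the same minimal block, which is the block of exactly one of
   them: their parity parts are 0 and 1...1, at distance 2t, and together
   with d(u,v) >= 1 this gives distance >= 2t+1. *)

Lemma arg_minn_inj_eq (T : finType) (A : {pred T}) (f : T -> nat) (i0 i1 : T) :
  injective f -> i0 \in A -> i1 \in A ->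
  [arg min_(i < i0 in A) f i] = [arg min_(i < i1 in A) f i].
Proof.
move=> f_inj i0A i1A.
case: arg_minnP => // m mA m_min; case: arg_minnP => // m' m'A m'_min.
by apply: f_inj; apply/eqP; rewrite eqn_leq m_min // m'_min.
Qed.

Lemma set2_card_le2 (T : finType) (S : {set T}) (a b : T) :
  a \in S -> b \in S -> a != b -> (#|S| <= 2)%N -> S = [set a; b].
Proof.
move=> aS bS ab S_le2; apply/esym/eqP; rewrite eqEcard cards2 ab S_le2 andbT.
by apply/subsetP => x; rewrite !inE => /orP[] /eqP ->.
Qed.

Section Hamming.
Variable F : finFieldType.
Local Open Scope ring_scope.

Lemma hammingE n (x y : 'rV[F]_n) :
  hamming x y = (\sum_(i < n) (x 0%R i != y 0%R i))%N.
Proof. by rewrite /hamming -sum1_card big_mkcond; apply: eq_bigr => i _; rewrite inE. Qed.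

Lemma hammingC n (x y : 'rV[F]_n) : hamming x y = hamming y x.
Proof. by rewrite !hammingE; apply: eq_bigr => i _; rewrite eq_sym. Qed.

Lemma hammingxx n (x : 'rV[F]_n) : hamming x x = 0%N.
Proof. by rewrite hammingE big1 // => i _; rewrite eqxx. Qed.

Lemma hamming_gt0 n (x y : 'rV[F]_n) : (0 < hamming x y)%N = (x != y).
Proof.
rewrite /hamming card_gt0; apply/set0Pn/idP => [[i]|x_neq_y].
  by rewrite inE; apply: contraNneq => ->.
have [i xy_i] : exists i, x 0 i != y 0 i.
  apply/existsP; apply: contraR x_neq_y => /existsPn xy_eq.
  by apply/eqP/rowP => i; apply/eqP; rewrite -[_ == _]negbK xy_eq.
by exists i; rewrite inE.
Qed.

Lemma hamming_row_mx m n (a c : 'rV[F]_m) (b d : 'rV[F]_n) :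
  hamming (row_mx a b) (row_mx c d) = (hamming a c + hamming b d)%N.
Proof.
rewrite !hammingE big_split_ord.
by congr (_ + _)%N; apply: eq_bigr => i _; rewrite ?row_mxEl ?row_mxEr.
Qed.

Lemma hamming_const_mx n (a b : F) :
  hamming (const_mx a : 'rV[F]_n) (const_mx b) = if a == b then 0%N else n.
Proof.
rewrite hammingE (eq_bigr (fun=> (a != b) : nat)); last by move=> i _; rewrite !mxE.
by rewrite sum_nat_const card_ord; case: (a == b); rewrite ?muln0 ?muln1.
Qed.

End Hamming.

Section LocallyBoundedPartition.
Variables (F : finFieldType) (k E : nat) (blk : 'rV[F]_k -> 'I_E).

Lemma mem_ballP (u w : 'rV[F]_k) (rho : nat) :
  (hamming u w <= rho)%N -> blk w \in ballP blk u rho.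
Proof. by move=> uw_le; rewrite inE; apply/set0Pn; exists w; rewrite !inE uw_le eqxx. Qed.

Lemma ballP_close (rho : nat) (u v : 'rV[F]_k) :
  locally_bounded blk rho 2 -> (hamming u v <= rho)%N -> blk u != blk v ->
  ballP blk u rho = [set blk u; blk v].
Proof.
move=> bounded uv_le buv; apply: set2_card_le2 => //; apply: mem_ballP => //.
by rewrite hammingxx.
Qed.

End LocallyBoundedPartition.

Theorem theorem6 (F : finFieldType) (k E t : nat) (blk : 'rV[F]_k -> 'I_E) :
  (0 < t)%N ->
  is_partition blk ->
  locally_bounded blk (2 * t) 2 ->
  encoding blk t (thm6_code blk t).
Proof.
move=> _ _ bounded; split=> [u | u v buv]; first by rewrite row_mxKl.
have [far | close] := leqP (2 * t + 1) (hamming u v).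
  by rewrite hamming_row_mx (leq_trans far) ?leq_addr.
rewrite addn1 ltnS in close.
have bvu : blk v != blk u by rewrite eq_sym.
have ball_u := ballP_close bounded close buv.
have ball_v : ballP blk v (2 * t) = [set blk v; blk u].
  by apply: ballP_close; rewrite // hammingC.
have same_min : [arg min_(j < blk v in ballP blk v (2 * t)) (j : nat)]
              = [arg min_(j < blk u in ballP blk u (2 * t)) (j : nat)].
  rewrite ball_v ball_u setUC; apply: arg_minn_inj_eq; [exact: val_inj | |];
    by rewrite !inE eqxx ?orbT.
have uv_pos : (0 < hamming u v)%N by rewrite hamming_gt0; apply: contraNneq buv => ->.
rewrite /thm6_code same_min hamming_row_mx.
have zero_neq_one : (0 == 1 :> F)%R = false by rewrite eq_sym oner_eq0.
case: arg_minnP; first by rewrite ball_u set21.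
move=> m; rewrite ball_u !inE => /orP[] /eqP -> _;
  rewrite eqxx ?(negbTE buv) ?(negbTE bvu) hamming_const_mx ?zero_neq_one ?oner_eq0;
  by rewrite [X in (_ <= X)%N]addnC leq_add2l.
Qed.
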